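(* Let $n$ be a positive integer and let $x,y,z$ be complex numbers with $x+y+z=1$. (i) If $r,s,t$ are complex numbers with $r+s+t=n-1$, then $$\sum_{k=0}^n(-1)^k\binom rk\binom s{n-k}B_k(x)E_{n-k}(z)-(-1)^n\sum_{k=0}^n(-1)^k\binom rk\binom t{n-k}B_k(y)E_{n-k}(z)=\frac r2\sum_{l=0}^{n-1}(-1)^l\binom sl\binom t{n-1-l}E_l(y)E_{n-1-l}(x).$$ (ii) If $r,s,t$ are complex numbers with $r+s+t=n$, then $$r\,M_n(s,t;x,y)+s\,M_n(t,r;y,z)+t\,M_n(r,s;z,x)=0,$$ where for complex $a,b,u,v$ we set $$M_n(a,b;u,v):=\sum_{k=0}^n(-1)^k\binom ak\binom b{n-k}B_{n-k}(u)B_k(v).$$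
   Context: Bernoulli numbers are defined by $B_0=1$ and $\sum_{k=0}^n\binom{n+1}kB_k=0$ for $n\ge1$; Euler numbers by $E_0=1$ and $\sum_{0\le k\le n,\,2\mid n-k}\binom nkE_k=0$ for $n\ge1$. The Bernoulli polynomials are $B_n(x)=\sum_{k=0}^n\binom nkB_kx^{n-k}$ and the Euler polynomials are $E_n(x)=\sum_{k=0}^n\binom nk\frac{E_k}{2^k}(x-\frac12)^{n-k}$. For complex $z$ and integer $k\ge0$, $\binom zk=z(z-1)\cdots(z-k+1)/k!$ (with $\binom z0=1$), and $\binom zk=0$ for negative integers $k$. *)

From HB Require Import structures.
From mathcomp Require Import all_boot all_order all_algebra.
From mathcomp Require Import complex.
From mathcomp Require Import reals.
Set Implicit Arguments. Unset Strict Implicit. Unset Printing Implicit Defensive.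
Import Order.TTheory GRing.Theory Num.Theory.
Local Open Scope ring_scope.

Section Defs.
Variable F : fieldType.

Definition binomC (z : F) (k : nat) : F :=
  (\prod_(i < k) (z - i%:R)) / (k`!)%:R.

(* bern_list n = [:: B_0; ...; B_n], using
   B_0 = 1 and sum_{k=0}^n C(n+1,k) B_k = 0 for n >= 1, i.e.
   B_n = - (1/(n+1)) sum_{k<n} C(n+1,k) B_k. *)
Fixpoint bern_list (n : nat) : seq F :=
  match n with
  | 0 => [:: 1]
  | m.+1 => let l := bern_list m in
      rcons l (- ((m.+2)%:R)^-1 * \sum_(k < m.+1) ('C(m.+2, k))%:R * nth 0 l k)
  end.

Definition bernoulli (n : nat) : F := nth 0 (bern_list n) n.

(* euler_list n = [:: E_0; ...; E_n], using E_0 = 1 and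
   sum_{0<=k<=n, n-k even} C(n,k) E_k = 0 for n >= 1. *)
Fixpoint euler_list (n : nat) : seq F :=
  match n with
  | 0 => [:: 1]
  | m.+1 => let l := euler_list m in
      rcons l (- \sum_(k < m.+1 | ~~ odd (m.+1 - k)) ('C(m.+1, k))%:R * nth 0 l k)
  end.

Definition euler (n : nat) : F := nth 0 (euler_list n) n.

Definition bernoulli_poly (n : nat) (x : F) : F :=
  \sum_(k < n.+1) ('C(n, k))%:R * bernoulli k * x ^+ (n - k).

Definition euler_poly (n : nat) (x : F) : F :=
  \sum_(k < n.+1) ('C(n, k))%:R * (euler k / 2%:R ^+ k) * (x - 2%:R^-1) ^+ (n - k).

Definition Mfun (n : nat) (a b u v : F) : F :=
  \sum_(k < n.+1) (-1) ^+ k * binomC a k * binomC b (n - k)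
                  * bernoulli_poly (n - k) u * bernoulli_poly k v.
End Defs.

(* Both identities are polynomial identities D_n(r, s, t; x, y, z) = 0 on the
   plane x + y + z = 1, proved by induction on n.  The Bernoulli and Euler
   polynomials are Appell sequences (P_k' = k P_(k-1)), so differentiating
   D_(n+1) along a line of the plane and using r C(r-1, k) = (r - k) C(r, k)
   gives t D_n(r, s, t-1) x' - s D_n(r, s-1, t) y', which vanishes by induction.
   Hence D_(n+1) is constant on the plane, and its value is its integral over
   [0, 1] along the line (X, 1 - X, 0) or (X, 0, 1 - X).  That integral follows
   from the reflections B_k(1-X) = (-1)^k B_k(X), E_k(1-X) = (-1)^k E_k(X) and
   from the closed forms of int_0^1 B_i B_j and int_0^1 E_i E_j obtained by
   integration by parts; what remains is an alternating sum of falling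
   factorials that telescopes to 0. *)

From HB Require Import structures.
From mathcomp Require Import all_boot all_order all_algebra.
From mathcomp Require Import complex.
From mathcomp Require Import reals.
From mathcomp Require Import ring.
Import Order.TTheory GRing.Theory Num.Theory.
Local Open Scope ring_scope.

Set Implicit Arguments. Unset Strict Implicit. Unset Printing Implicit Defensive.

Lemma natr_fact_neq0 (F : numFieldType) n : n`!%:R != 0 :> F.
Proof. by rewrite pnatr_eq0 -lt0n fact_gt0. Qed.

Ltac natr_neq0 := repeat (apply/andP; split);
  (exact: natr_fact_neq0 || by rewrite -?natrD ?nat1r pnatr_eq0 -lt0n ?addn_gt0).

Section GeneralizedBinomial.
Variable F : numFieldType.
Implicit Types (a b c r s : F) (k n : nat).

Definition ffact a k : F := \prod_(i < k) (a - i%:R).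

Lemma ffact0 a : ffact a 0 = 1.
Proof. by rewrite /ffact big_ord0. Qed.

Lemma ffactS a k : ffact a k.+1 = ffact a k * (a - k%:R).
Proof. by rewrite /ffact big_ord_recr. Qed.

Lemma ffactSl a k : ffact a k.+1 = a * ffact (a - 1) k.
Proof.
rewrite /ffact big_ord_recl subr0; congr (_ * _); apply: eq_bigr => i _.
by rewrite lift0 /= mulrS opprD addrA.
Qed.

Lemma binomCE a k : binomC a k = ffact a k / k`!%:R.
Proof. by []. Qed.

Lemma binomC0 a : binomC a 0 = 1.
Proof. by rewrite binomCE ffact0 fact0 divr1. Qed.

Lemma mul_binomC_diag a k : a * binomC (a - 1) k = k.+1%:R * binomC a k.+1.
Proof.
rewrite !binomCE ffactSl factS natrM.
by field; natr_neq0.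
Qed.

Lemma mul_binomC_down a k : a * binomC (a - 1) k = (a - k%:R) * binomC a k.
Proof.
rewrite mul_binomC_diag !binomCE ffactS factS natrM.
by field; natr_neq0.
Qed.

Lemma binomC_pascal3 a b c n k : a + b + c = n%:R -> (k <= n)%N ->
  c * binomC a k * binomC b (n - k) + binomC a k * (b * binomC (b - 1) (n - k))
    + a * binomC (a - 1) k * binomC b (n - k) = 0.
Proof.
move=> habc kn; rewrite !mul_binomC_down natrB //.
have -> : c = n%:R - a - b by rewrite -habc; ring.
ring.
Qed.

Lemma ffact_alternating_sum r s n :
  (r + s - n%:R) * \sum_(k < n.+1) (-1) ^+ (n - k) * ffact r k * ffact s (n - k) =
  (-1) ^+ n * ffact s n.+1 + ffact r n.+1.
Proof.
pose b k := (-1) ^+ (n.+1 - k) * ffact r k * ffact s (n.+1 - k).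
have step k : (k <= n)%N ->
    (r + s - n%:R) * ((-1) ^+ (n - k) * ffact r k * ffact s (n - k)) = b k.+1 - b k.
  move=> kn; rewrite /b subSS (subSn kn) ffactS ffactS natrB // exprS; ring.
rewrite mulr_sumr (eq_bigr (fun k : 'I_n.+1 => b k.+1 - b k)); last first.
  by move=> k _; rewrite step // -ltnS.
rewrite -(big_mkord xpredT (fun k => b k.+1 - b k)) telescope_sumr //.
by rewrite /b subn0 subnn !ffact0 expr0 exprS; ring.
Qed.

End GeneralizedBinomial.

Section PolyIntegral.
Variable F : numFieldType.
Implicit Types (p q : {poly F}) (c : F).

Lemma deriv_eq0_polyC p : p^`() = 0 -> p = (p`_0)%:P.
Proof.
move=> dp0; apply/polyP => -[|i]; rewrite coefC //=.
have /eqP := congr1 (fun q => q`_i) dp0.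
by rewrite coef_deriv coef0 -mulr_natr mulf_eq0 pnatr_eq0 orbF => /eqP.
Qed.

Definition int01 p : F := \sum_(i < size p) p`_i / i.+1%:R.

Lemma int01_widen p N : (size p <= N)%N -> int01 p = \sum_(i < N) p`_i / i.+1%:R.
Proof.
move=> pN; rewrite /int01 (big_ord_widen N (fun i => p`_i / i.+1%:R) pN).
rewrite big_mkcond; apply: eq_bigr => i _.
by case: ltnP => // /(nth_default 0) ->; rewrite mul0r.
Qed.

Lemma int01_is_zmod_morphism : zmod_morphism int01.
Proof.
move=> p q; pose N := maxn (size p) (size q).
have pN : (size p <= N)%N by rewrite leq_maxl.
have qN : (size q <= N)%N by rewrite leq_maxr.
have pqN : (size (p - q)%R <= N)%N by rewrite (leq_trans (size_polyD _ _)) // size_polyN.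
rewrite (int01_widen pN) (int01_widen qN) (int01_widen pqN) -sumrB.
by apply: eq_bigr => i _; rewrite coefB mulrBl.
Qed.

HB.instance Definition _ :=
  GRing.isZmodMorphism.Build {poly F} F int01 int01_is_zmod_morphism.

Lemma int01Z c p : int01 (c *: p) = c * int01 p.
Proof.
rewrite (int01_widen (size_scale_leq c p)) /int01 mulr_sumr.
by apply: eq_bigr => i _; rewrite coefZ mulrA.
Qed.

Lemma int01C c : int01 c%:P = c.
Proof.
rewrite (@int01_widen _ 1) ?size_polyC ?leq_b1 //.
by rewrite big_ord1 coefC divr1.
Qed.

Lemma int01_deriv p : int01 p^`() = p.[1] - p.[0].
Proof.
have size_dp : (size p^`() <= size p)%N.
  have [->|p0] := eqVneq p 0; first by rewrite deriv0 size_poly0.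
  exact/ltnW/lt_size_deriv.
rewrite (int01_widen size_dp) horner_coef0 (horner_coef_wide _ (leqnSn (size p))).
rewrite big_ord_recl /= expr0 mulr1 addrC addKr; apply: eq_bigr => i _.
by rewrite coef_deriv expr1n mulr1 -(mulr_natr p`_i.+1) mulfK ?pnatr_eq0.
Qed.

Lemma deriv_eq0_int01 p : p^`() = 0 -> p = (int01 p)%:P.
Proof. by move=> /deriv_eq0_polyC ->; rewrite int01C. Qed.

End PolyIntegral.

Section Appell.
Variable F : numFieldType.
Implicit Types (P Q : nat -> {poly F}) (p q u : {poly F}) (c : F) (k : nat).

(* At k = 0 the condition says that P 0 is constant. *)
Definition appell P := forall k, (P k)^`() = k%:R *: P k.-1.

Definition appell_poly (a : nat -> F) c k : {poly F} :=
  \sum_(j < k.+1) ('C(k, j)%:R * a j) *: ('X - c%:P) ^+ (k - j).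

Lemma horner_appell_poly a c k x :
  (appell_poly a c k).[x] = \sum_(j < k.+1) 'C(k, j)%:R * a j * (x - c) ^+ (k - j).
Proof.
rewrite horner_sum; apply: eq_bigr => j _.
by rewrite hornerZ horner_exp hornerD hornerN hornerX hornerC.
Qed.

Lemma appell_poly0 a c : appell_poly a c 0 = (a 0)%:P.
Proof. by rewrite /appell_poly big_ord1 bin0 mul1r expr0 alg_polyC. Qed.

Lemma appell_polyP a c : appell (appell_poly a c).
Proof.
case=> [|k]; first by rewrite appell_poly0 derivC scale0r.
rewrite /appell_poly raddf_sum big_ord_recr /= subnn expr0 derivZ derivC scaler0.
rewrite addr0 scaler_sumr; apply: eq_bigr => j _.
have jk : (j <= k)%N by rewrite -ltnS.
rewrite derivZ deriv_exp derivB derivX derivC subr0 mul1r (subSn jk) /=.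
rewrite -scaler_nat !scalerA; congr (_ *: _).
by rewrite -(subSn jk) mulrAC -natrM mulnC -mul_bin_down natrM mulrA.
Qed.

Section AppellSequence.
Variable P : nat -> {poly F}.
Hypothesis appP : appell P.

Lemma deriv_appell_comp k u :
  (P k.+1 \Po u)^`() = k.+1%:R *: ((P k \Po u) * u^`()).
Proof. by rewrite deriv_comp appP comp_polyZ scalerAl. Qed.

Lemma int01_appell k : int01 (P k) = ((P k.+1).[1] - (P k.+1).[0]) / k.+1%:R.
Proof. by rewrite -int01_deriv appP int01Z [_ * int01 _]mulrC mulfK ?pnatr_eq0. Qed.

Lemma int01_appell_mul k q :
  int01 (P k * q) =
  ((P k.+1 * q).[1] - (P k.+1 * q).[0] - int01 (P k.+1 * q^`())) / k.+1%:R.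
Proof.
rewrite -int01_deriv -raddfB /= derivM addrK appP -scalerAl int01Z.
by rewrite [_ * int01 _]mulrC mulfK ?pnatr_eq0.
Qed.

Lemma appell_reflect : appell (fun k => (-1) ^+ k *: (P k \Po (1 - 'X))).
Proof.
case=> [|k].
  by rewrite scale0r derivZ deriv_comp appP scale0r comp_poly0 mul0r scaler0.
rewrite derivZ deriv_appell_comp derivB derivC derivX sub0r mulrN1 exprS mulN1r.
by rewrite !(scalerN, scaleNr, opprK) !scalerA mulrC.
Qed.

End AppellSequence.

Lemma appell_eq P Q (lam : {poly F} -> F) :
  appell P -> appell Q -> P 0 = Q 0 ->
  {morph lam : p q / p - q} -> (forall c, lam c%:P = 0 -> c = 0) ->
  (forall k, lam (P k.+1) = lam (Q k.+1)) -> P =1 Q.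
Proof.
move=> appP appQ PQ0 lamB lamC0 lamPQ; elim=> // k IHk.
have dPQ : (P k.+1 - Q k.+1)^`() = 0 by rewrite derivB appP appQ IHk subrr.
apply/eqP; rewrite -subr_eq0 (deriv_eq0_polyC dPQ) polyC_eq0; apply/eqP/lamC0.
by rewrite -(deriv_eq0_polyC dPQ) lamB lamPQ subrr.
Qed.

End Appell.

Section BernoulliEuler.
Variable F : numFieldType.
Implicit Types (k m j l : nat) (x : F).

Local Notation bernoulli := (bernoulli F).
Local Notation euler := (euler F).

Lemma size_bern_list m : size (bern_list F m) = m.+1.
Proof. by elim: m => //= m IHm; rewrite size_rcons IHm. Qed.

Lemma nth_bern_list m j : (j <= m)%N -> nth 0 (bern_list F m) j = bernoulli j.
Proof.
elim: m => [|m IHm]; first by rewrite leqn0 => /eqP ->.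
rewrite leq_eqVlt => /predU1P[-> //|jm].
by rewrite /= nth_rcons size_bern_list jm IHm.
Qed.

Lemma bernoulli_sum m : \sum_(j < m.+2) 'C(m.+2, j)%:R * bernoulli j = 0.
Proof.
rewrite big_ord_recr /= binSn {2}/bernoulli /= nth_rcons size_bern_list ltnn eqxx.
rewrite mulrA mulrN mulfV ?pnatr_eq0 // mulN1r.
by rewrite -sumrB big1 // => j _; rewrite nth_bern_list ?subrr // -ltnS.
Qed.

Lemma size_euler_list m : size (euler_list F m) = m.+1.
Proof. by elim: m => //= m IHm; rewrite size_rcons IHm. Qed.

Lemma nth_euler_list m j : (j <= m)%N -> nth 0 (euler_list F m) j = euler j.
Proof.
elim: m => [|m IHm]; first by rewrite leqn0 => /eqP ->.
rewrite leq_eqVlt => /predU1P[-> //|jm].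
by rewrite /= nth_rcons size_euler_list jm IHm.
Qed.

Lemma euler_sum m :
  \sum_(j < m.+2 | ~~ odd (m.+1 - j)) 'C(m.+1, j)%:R * euler j = 0.
Proof.
rewrite big_mkcond big_ord_recr /= subnn binn mul1r {2}/euler /=.
rewrite nth_rcons size_euler_list ltnn eqxx -big_mkcond /=.
by rewrite -sumrB big1 // => j _; rewrite nth_euler_list ?subrr // -ltnS.
Qed.

Definition bern_poly k : {poly F} := appell_poly bernoulli 0 k.

Definition eul_poly k : {poly F} :=
  appell_poly (fun j => euler j / 2%:R ^+ j) 2%:R^-1 k.

Lemma horner_bern_poly k x : (bern_poly k).[x] = bernoulli_poly k x.
Proof.
by rewrite horner_appell_poly; apply: eq_bigr => j _; rewrite subr0.
Qed.

Lemma horner_eul_poly k x : (eul_poly k).[x] = euler_poly k x.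
Proof. exact: horner_appell_poly. Qed.

Lemma bern_polyP : appell bern_poly.
Proof. exact: appell_polyP. Qed.

Lemma eul_polyP : appell eul_poly.
Proof. exact: appell_polyP. Qed.

Lemma bern_poly0 : bern_poly 0 = 1.
Proof. by rewrite /bern_poly appell_poly0. Qed.

Lemma eul_poly0 : eul_poly 0 = 1.
Proof. by rewrite /eul_poly appell_poly0 /= divr1. Qed.

Lemma bern_poly1 : bern_poly 1 = 'X - (2%:R^-1)%:P.
Proof.
rewrite /bern_poly /appell_poly !big_ord_recr big_ord0 /= add0r subr0.
have B1 : bernoulli 1 = - 2%:R^-1.
  by rewrite /bernoulli /= big_ord1 bin0 mul1r mulr1.
by rewrite B1 !bin0 binn !mul1r expr1 expr0 scale1r -polyCN alg_polyC.
Qed.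

Lemma bern_poly_at0 k : (bern_poly k).[0] = bernoulli k.
Proof.
rewrite horner_appell_poly subr0 big_ord_recr /= subnn expr0 binn mul1r mulr1.
rewrite big1 ?add0r // => j _.
by rewrite expr0n subn_eq0 leqNgt ltn_ord mulr0.
Qed.

Lemma bern_poly_at1 k : (bern_poly k.+2).[1] = bernoulli k.+2.
Proof.
rewrite horner_appell_poly subr0 big_ord_recr /= subnn expr0 binn mul1r mulr1.
rewrite (eq_bigr (fun j : 'I_k.+2 => 'C(k.+2, j)%:R * bernoulli j)).
  by rewrite bernoulli_sum add0r.
by move=> j _; rewrite expr1n mulr1.
Qed.

Lemma eul_poly_at1 k : (eul_poly k.+1).[1] = - (eul_poly k.+1).[0].
Proof.
apply/eqP; rewrite -addr_eq0 !horner_appell_poly -big_split /=.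
set h : F := 2%:R^-1.
have oneBh : 1 - h = h by rewrite /h; field.
rewrite (eq_bigr (fun j : 'I_k.+2 => h ^+ k.+1 * 2%:R *
  (if ~~ odd (k.+1 - j) then 'C(k.+1, j)%:R * euler j else 0))); last first.
  move=> j _; have jk : (j <= k.+1)%N by rewrite -ltnS.
  have hk : h ^+ k.+1 = (2%:R ^+ j)^-1 * h ^+ (k.+1 - j).
    by rewrite -exprVn -exprD subnKC.
  rewrite oneBh sub0r exprNn -signr_odd hk.
  by case: odd => /=; rewrite ?expr1 ?expr0; ring.
by rewrite -mulr_sumr -big_mkcond euler_sum mulr0.
Qed.

Lemma int01_bern_poly k : int01 (bern_poly k) = (k == 0)%:R.
Proof.
case: k => [|k]; first by rewrite bern_poly0 -polyC1 int01C.
by rewrite (int01_appell bern_polyP) bern_poly_at1 bern_poly_at0 subrr mul0r.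
Qed.

(* Among Appell sequences, bern_poly is pinned down by int_0^1 B_k = [k == 0]. *)
Lemma bern_poly_reflect k : bern_poly k \Po (1 - 'X) = (-1) ^+ k *: bern_poly k.
Proof.
pose Q k := (-1) ^+ k *: (bern_poly k \Po (1 - 'X)).
have appQ : appell Q := appell_reflect bern_polyP.
suff /(congr1 ( *:%R ((-1) ^+ k))) : Q k = bern_poly k.
  by rewrite scalerA -expr2 sqrr_sign scale1r.
apply: (appell_eq appQ bern_polyP (lam := @int01 F)) => [|||j].
- by rewrite /Q bern_poly0 -polyC1 comp_polyC scale1r.
- exact: raddfB.
- by move=> c; rewrite int01C.
rewrite int01_bern_poly (int01_appell appQ) /Q !hornerZ !horner_comp !hornerE.
by rewrite subr0 subrr bern_poly_at1 bern_poly_at0 subrr mul0r.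
Qed.

Lemma int01_bern_poly_reflect k : int01 (bern_poly k \Po (1 - 'X)) = (k == 0)%:R.
Proof.
rewrite bern_poly_reflect int01Z int01_bern_poly.
by case: k => [|k]; rewrite ?mul1r ?mulr0.
Qed.

(* Among Appell sequences, eul_poly is pinned down by E_k(0) + E_k(1) = 2 [k == 0]. *)
Lemma eul_poly_reflect k : eul_poly k \Po (1 - 'X) = (-1) ^+ k *: eul_poly k.
Proof.
pose Q k := (-1) ^+ k *: (eul_poly k \Po (1 - 'X)).
have appQ : appell Q := appell_reflect eul_polyP.
suff /(congr1 ( *:%R ((-1) ^+ k))) : Q k = eul_poly k.
  by rewrite scalerA -expr2 sqrr_sign scale1r.
apply: (appell_eq appQ eul_polyP (lam := fun p => p.[0] + p.[1])) => [|p q|c|j].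
- by rewrite /Q eul_poly0 -polyC1 comp_polyC scale1r.
- by rewrite !(hornerD, hornerN) addrACA opprD.
- by rewrite !hornerC -mulr2n -mulr_natr => /eqP; rewrite mulf_eq0 pnatr_eq0 orbF => /eqP.
rewrite /Q !hornerZ !horner_comp !hornerE subr0 subrr -mulrDr addrC.
by rewrite eul_poly_at1 !subrr mulr0.
Qed.

End BernoulliEuler.

Section ProductIntegrals.
Variable F : numFieldType.
Implicit Types (k m j l : nat).

Local Notation bernoulli := (bernoulli F).
Local Notation B := (@bern_poly F).
Local Notation E := (@eul_poly F).

Lemma int01_bern_poly_mul m k :
  int01 (B m.+1 * B k.+1) =
  (-1) ^+ k * m.+1`!%:R * k.+1`!%:R / (m + k).+2`!%:R * bernoulli (m + k).+2.
Proof.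
elim: k m => [|k IHk] m.
  rewrite (int01_appell_mul (bern_polyP F)) (bern_polyP F 1) bern_poly0 scale1r mulr1.
  rewrite int01_bern_poly subr0 !hornerM bern_poly_at1 bern_poly_at0 bern_poly1.
  rewrite !hornerE [(m.+2)`!]factS natrM.
  by field; natr_neq0.
rewrite (int01_appell_mul (bern_polyP F)) (bern_polyP F k.+2) -scalerAr int01Z IHk.
rewrite !hornerM !bern_poly_at1 !bern_poly_at0 subrr sub0r addSn addnS.
rewrite [(m.+2)`!]factS [(k.+2)`!]factS !natrM exprS.
by field; natr_neq0.
Qed.

Lemma int01_eul_poly_mul l j :
  int01 (E l * E j) =
  (-1) ^+ j * l`!%:R * j`!%:R / (l + j).+1`!%:R * (- 2%:R) * (E (l + j).+1).[0].
Proof.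
elim: j l => [|j IHj] l.
  rewrite (int01_appell_mul (eul_polyP F)) eul_poly0 -polyC1 derivC mulr0 raddf0.
  rewrite subr0 !mulr1 eul_poly_at1 addn0 [(l.+1)`!]factS natrM.
  by field; natr_neq0.
rewrite (int01_appell_mul (eul_polyP F)) (eul_polyP F j.+1) -scalerAr int01Z IHj.
rewrite !hornerM !eul_poly_at1 mulrNN subrr sub0r addSn addnS.
rewrite [(l.+1)`!]factS [(j.+1)`!]factS !natrM exprS.
by field; natr_neq0.
Qed.

End ProductIntegrals.

Section BinomialConvolution.
Variable F : numFieldType.
Implicit Types (P Q : nat -> {poly F}) (a b c : F) (u v w : {poly F}) (n k : nat).

Definition binconv P Q n a b u v : {poly F} :=
  \sum_(k < n.+1) ((-1) ^+ k * binomC a k * binomC b (n - k)) *: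
    ((P (n - k)%N \Po u) * (Q k \Po v)).

Lemma binconv_comp P Q n a b u v w :
  binconv P Q n a b u v \Po w = binconv P Q n a b (u \Po w) (v \Po w).
Proof.
rewrite /binconv raddf_sum; apply: eq_bigr => k _ /=.
by rewrite comp_polyZ comp_polyM !comp_polyA.
Qed.

Lemma horner_binconv P Q n a b u v x :
  (binconv P Q n a b u v).[x] =
  \sum_(k < n.+1) (-1) ^+ k * binomC a k * binomC b (n - k) *
    ((P (n - k)%N).[u.[x]] * (Q k).[v.[x]]).
Proof.
rewrite horner_sum; apply: eq_bigr => k _.
by rewrite hornerZ hornerM !horner_comp.
Qed.

Lemma binconv0 P Q a b u v : binconv P Q 0 a b u v = (P 0 \Po u) * (Q 0 \Po v).
Proof. by rewrite /binconv big_ord1 !binomC0 expr0 !mul1r scale1r. Qed.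

Lemma binconv_pascal3 P Q n a b c u v : a + b + c = n%:R ->
  c *: binconv P Q n a b u v + b *: binconv P Q n a (b - 1) u v
    + a *: binconv P Q n (a - 1) b u v = 0.
Proof.
move=> abc; rewrite /binconv !scaler_sumr -!big_split big1 // => k _ /=.
rewrite !scalerA -!scalerDl.
have kn : (k <= n)%N by rewrite -ltnS.
move: (binomC_pascal3 abc kn).
move: (binomC a k) (binomC (a - 1) k) (binomC b (n - k)) (binomC (b - 1) (n - k)).
move=> A A' B B' pascal.
suff -> : c * ((-1) ^+ k * A * B) + b * ((-1) ^+ k * A * B') + a * ((-1) ^+ k * A' * B)
  = (-1) ^+ k * (c * A * B + A * (b * B') + a * A' * B) by rewrite pascal mulr0 scale0r.
ring.
Qed.

Lemma int01_binconv_constl P Q n a b c v :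
  (forall k, int01 (Q k \Po v) = (k == 0)%:R) ->
  int01 (binconv P Q n a b c%:P v) = binomC b n * (P n).[c].
Proof.
move=> intQ; rewrite /binconv raddf_sum big_ord_recl big1 ?addr0 => [|k _] /=;
  rewrite comp_polyCr mul_polyC !int01Z intQ.
  by rewrite expr0 binomC0 subn0 !mul1r mulr1.
by rewrite /bump leq0n add1n !mulr0.
Qed.

Lemma int01_binconv_constr P Q n a b u c :
  (forall k, int01 (P k \Po u) = (k == 0)%:R) ->
  int01 (binconv P Q n a b u c%:P) = (-1) ^+ n * binomC a n * (Q n).[c].
Proof.
move=> intP; rewrite /binconv raddf_sum big_ord_recr big1 => [|k _] /=;
  rewrite comp_polyCr [_ * _%:P]mulrC mul_polyC !int01Z intP.
  by rewrite add0r subnn binomC0 !mulr1.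
by rewrite subn_eq0 leqNgt ltn_ord !mulr0.
Qed.

Section AppellConvolution.
Variables P Q : nat -> {poly F}.
Hypotheses (appP : appell P) (appQ : appell Q).

Lemma deriv_binconv n a b u v :
  (binconv P Q n.+1 a b u v)^`() =
  b *: (binconv P Q n a (b - 1) u v * u^`())
    - a *: (binconv P Q n (a - 1) b u v * v^`()).
Proof.
rewrite /binconv raddf_sum.
under eq_bigr do rewrite /= derivZ derivM scalerDr.
rewrite big_split /= !mulr_suml !scaler_sumr -sumrN; congr (_ + _).
- rewrite big_ord_recr /= subnn deriv_comp appP scale0r comp_poly0 !mul0r scaler0 addr0.
  apply: eq_bigr => k _; have kn : (k <= n)%N by rewrite -ltnS.
  rewrite (subSn kn) (deriv_appell_comp appP) -!scalerAl !scalerA.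
  congr (_ *: _); last by rewrite mulrAC.
  move: (mul_binomC_diag b (n - k)).
  move: (binomC b (n - k).+1) (binomC (b - 1) (n - k)) (binomC a k) => B1 B' A diag.
  transitivity ((-1) ^+ k * A * ((n - k).+1%:R * B1)); first by ring.
  by rewrite -diag; ring.
- rewrite big_ord_recl /= deriv_comp appQ scale0r comp_poly0 !mul0r mulr0 scaler0 add0r.
  apply: eq_bigr => k _; rewrite /bump /= add1n subSS (deriv_appell_comp appQ).
  rewrite -scalerAr -!scalerAl !scalerA -scaleNr.
  congr (_ *: _); last by rewrite mulrA.
  move: (mul_binomC_diag a k).
  move: (binomC a k.+1) (binomC (a - 1) k) (binomC b (n - k)) => A1 A' B diag.
  transitivity (- ((-1) ^+ k * B * (k.+1%:R * A1))); first by rewrite exprS; ring.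
  by rewrite -diag; ring.
Qed.

End AppellConvolution.

End BinomialConvolution.

Section AffinePlane.
Variable F : numFieldType.
Implicit Types (x y z w : {poly F}).

(* Psi is constant along every line of the plane, and the segment
   (a, b + cX, c(1 - X)) joins any point (a, b, c) of it to (X, 1 - X, 0). *)
Lemma affine_plane_const (Psi : {poly F} -> {poly F} -> {poly F} -> {poly F}) :
  (forall x y z w, Psi x y z \Po w = Psi (x \Po w) (y \Po w) (z \Po w)) ->
  (forall x y z, x + y + z = 1 -> (Psi x y z)^`() = 0) ->
  forall x y z, x + y + z = 1 -> Psi x y z = Psi 'X (1 - 'X) 0.
Proof.
move=> Psi_comp dPsi0.
have Psi_const x y z w : x + y + z = 1 -> Psi x y z \Po w = Psi x y z.
  by move=> /dPsi0 /deriv_eq0_polyC ->; rewrite comp_polyC.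
move=> x y z sum1; rewrite -(Psi_const x y z 0) // Psi_comp.
have cst p w : (p \Po 0) \Po w = p \Po 0 by rewrite comp_poly0r comp_polyC.
move: (cst x) (cst y) (cst z) (congr1 (comp_poly 0) sum1).
rewrite !comp_polyD rmorph1.
move: (x \Po 0) (y \Po 0) (z \Po 0) => a b c ca cb cc abc.
have path_sum : a + (b + c * 'X) + (c - c * 'X) = 1 by rewrite -abc; ring.
have := Psi_const _ _ _ 0 path_sum; have := Psi_const _ _ _ 1 path_sum.
rewrite !Psi_comp !(comp_polyB, comp_polyD, comp_polyM, comp_polyX, ca, cb, cc).
rewrite mulr0 mulr1 addr0 subr0 subrr => <- ->.
rewrite -(Psi_const 'X (1 - 'X) 0 a); last by rewrite addr0 addrC subrK.
rewrite Psi_comp comp_polyX comp_polyB comp_polyX rmorph1 comp_poly0.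
by rewrite -[in RHS]abc; congr Psi; ring.
Qed.

End AffinePlane.

Section VanishingScheme.
Variable F : numFieldType.
Variable Phi : nat -> F -> F -> F -> {poly F} -> {poly F} -> {poly F} -> {poly F}.
Variables (d : F) (x0 y0 z0 : {poly F}).
Hypothesis Phi_comp : forall n r s t x y z w,
  Phi n r s t x y z \Po w = Phi n r s t (x \Po w) (y \Po w) (z \Po w).
Hypothesis Phi0 : forall r s t x y z, r + s + t = d -> Phi 0 r s t x y z = 0.
Hypothesis deriv_Phi : forall n r s t x y z,
  r + s + t = n.+1%:R + d -> x^`() + y^`() + z^`() = 0 ->
  (Phi n.+1 r s t x y z)^`() =
  t *: (Phi n r s (t - 1) x y z * x^`()) - s *: (Phi n r (s - 1) t x y z * y^`()).
Hypothesis path_sum : x0 + y0 + z0 = 1.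
Hypothesis int01_Phi_path : forall n r s t,
  r + s + t = n.+1%:R + d -> int01 (Phi n.+1 r s t x0 y0 z0) = 0.

Lemma vanishing_scheme n r s t x y z :
  r + s + t = n%:R + d -> x + y + z = 1 -> Phi n r s t x y z = 0.
Proof.
elim: n r s t x y z => [|n IHn] r s t x y z rst sum1.
  by apply: Phi0; rewrite rst add0r.
have dPhi x' y' z' : x' + y' + z' = 1 -> (Phi n.+1 r s t x' y' z')^`() = 0.
  move=> sum1'; rewrite deriv_Phi //; last by rewrite -!derivD sum1' -polyC1 derivC.
  have rst1 : r + s + t - 1 = n%:R + d by rewrite rst -natr1; ring.
  by rewrite !IHn ?mul0r ?scaler0 ?subrr // -rst1; ring.
rewrite (affine_plane_const (Phi_comp n.+1 r s t) dPhi sum1).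
rewrite -(affine_plane_const (Phi_comp n.+1 r s t) dPhi path_sum).
by rewrite (deriv_eq0_int01 (dPhi _ _ _ path_sum)) int01_Phi_path.
Qed.

End VanishingScheme.

Section IdentityOne.
Variable F : numFieldType.
Implicit Types (r s t : F) (x y z : {poly F}) (n : nat).

Local Notation B := (@bern_poly F).
Local Notation E := (@eul_poly F).

Definition eul_conv_pred n s t x y : {poly F} :=
  if n is m.+1 then binconv E E m s t x y else 0.

(* Identity (i) with both sides on the left; for n = 0 its right-hand sum is
   empty. *)
Definition defect1 n r s t x y z : {poly F} :=
  binconv E B n r s z x - (-1) ^+ n *: binconv E B n r t z y
    - (r / 2%:R) *: eul_conv_pred n s t x y.

Lemma defect1_comp n r s t x y z w :
  defect1 n r s t x y z \Po w = defect1 n r s t (x \Po w) (y \Po w) (z \Po w).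
Proof.
rewrite /defect1 !comp_polyB !comp_polyZ !binconv_comp.
by case: n => [|n] /=; rewrite ?comp_poly0 ?binconv_comp.
Qed.

Lemma defect1_0 r s t x y z : defect1 0 r s t x y z = 0.
Proof.
by rewrite /defect1 /= scaler0 subr0 expr0 scale1r !binconv0 bern_poly0 !rmorph1 subrr.
Qed.

Lemma deriv_eul_conv_pred n s t x y :
  (eul_conv_pred n.+1 s t x y)^`() =
  t *: (eul_conv_pred n s (t - 1) x y * x^`())
    - s *: (eul_conv_pred n (s - 1) t x y * y^`()).
Proof.
case: n => [|n]; last exact: deriv_binconv (eul_polyP F) (eul_polyP F) _ _ _ _ _.
by rewrite /= binconv0 eul_poly0 -polyC1 !comp_polyC -polyCM derivC !mul0r !scaler0 subr0.
Qed.

Lemma deriv_defect1 n r s t x y z :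
  r + s + t = n%:R -> x^`() + y^`() + z^`() = 0 ->
  (defect1 n.+1 r s t x y z)^`() =
  t *: (defect1 n r s (t - 1) x y z * x^`()) - s *: (defect1 n r (s - 1) t x y z * y^`()).
Proof.
move=> rst dsum.
have dz : z^`() = - x^`() - y^`() by rewrite -[RHS]add0r -dsum; ring.
have pascal_s := binconv_pascal3 E B z x rst.
have pascal_t : s *: binconv E B n r t z y + t *: binconv E B n r (t - 1) z y
    + r *: binconv E B n (r - 1) t z y = 0.
  by apply: binconv_pascal3; rewrite -rst; ring.
rewrite /defect1 !derivB !derivZ deriv_eul_conv_pred.
rewrite !(deriv_binconv (eul_polyP F) (bern_polyP F)) dz exprS mulN1r.
move: pascal_s pascal_t; rewrite -!mul_polyC !polyCN.
move: (binconv E B n r s z x) (binconv E B n r (s - 1) z x) (binconv E B n (r - 1) s z x).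
move: (binconv E B n r t z y) (binconv E B n r (t - 1) z y) (binconv E B n (r - 1) t z y).
move: (eul_conv_pred n s (t - 1) x y) (eul_conv_pred n (s - 1) t x y).
move=> C1 C2 B1 B2 B3 A1 A2 A3 pascal_s pascal_t.
set sg := ((-1) ^+ n)%:P.
apply/eqP; rewrite -subr_eq0; apply/eqP.
transitivity (- (x^`() * (t%:P * A1 + s%:P * A2 + r%:P * A3)
  + sg * y^`() * (s%:P * B1 + t%:P * B2 + r%:P * B3))); first by ring.
by rewrite pascal_s pascal_t !mulr0 addr0 oppr0.
Qed.

Lemma int01_binconv_eul_reflect n s t :
  int01 (binconv E E n s t 'X (1 - 'X)) =
  (\sum_(k < n.+1) (-1) ^+ (n - k) * ffact s k * ffact t (n - k))
    / n.+1`!%:R * (- 2%:R) * (E n.+1).[0].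
Proof.
rewrite /binconv raddf_sum !mulr_suml; apply: eq_bigr => -[k kn] _ /=.
rewrite comp_polyXr eul_poly_reflect -scalerAr !int01Z [E _ * E _]mulrC.
rewrite int01_eul_poly_mul.
rewrite (subnKC (kn : (k <= n)%N)) !binomCE -[(-1) ^+ k]signr_odd.
by case: odd; rewrite ?expr1 ?expr0; field; natr_neq0.
Qed.

Lemma int01_defect1_path n r s t : r + s + t = n%:R ->
  int01 (defect1 n.+1 r s t 'X (1 - 'X) 0%:P) = 0.
Proof.
move=> rst; rewrite /defect1 /= !raddfB /= !int01Z int01_binconv_eul_reflect.
rewrite !int01_binconv_constl => [|k|k]; last 2 first.
- exact: int01_bern_poly_reflect.
- by rewrite comp_polyXr int01_bern_poly.
rewrite !binomCE; move: (ffact_alternating_sum s t n).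
move: (\sum_(k < n.+1) _) (ffact s n.+1) (ffact t n.+1) ((E n.+1).[0]) => S fs ft e tele.
have -> : r = n%:R - s - t by rewrite -rst; ring.
transitivity (e / n.+1`!%:R * (fs + (-1) ^+ n * ft - (s + t - n%:R) * S)).
  by rewrite exprS; field; natr_neq0.
by rewrite tele; ring.
Qed.

Lemma defect1_eq0 n r s t x y z :
  r + s + t = n%:R - 1 -> x + y + z = 1 -> defect1 n r s t x y z = 0.
Proof.
have succ_pred m r' s' t' : r' + s' + t' = m.+1%:R - 1 -> r' + s' + t' = m%:R.
  by rewrite -natr1 addrK.
apply: (vanishing_scheme (x0 := 'X) (y0 := 1 - 'X) (z0 := 0%:P) (@defect1_comp)).
- by move=> *; apply: defect1_0.
- by move=> m *; apply: deriv_defect1 => //; apply: succ_pred.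
- by rewrite polyC0 addr0 addrC subrK.
- by move=> m *; apply: int01_defect1_path; apply: succ_pred.
Qed.

Lemma horner_defect1 n r s t (x y z w : F) :
  (defect1 n.+1 r s t x%:P y%:P z%:P).[w] =
  \sum_(k < n.+2) (-1) ^+ k * binomC r k * binomC s (n.+1 - k)
     * bernoulli_poly k x * euler_poly (n.+1 - k) z
  - (-1) ^+ n.+1 * \sum_(k < n.+2) (-1) ^+ k * binomC r k * binomC t (n.+1 - k)
     * bernoulli_poly k y * euler_poly (n.+1 - k) z
  - r / 2%:R * \sum_(l < n.+1) (-1) ^+ l * binomC s l * binomC t (n - l)
     * euler_poly l y * euler_poly (n - l) x.
Proof.
rewrite /defect1 /= !(hornerD, hornerN, hornerZ) !horner_binconv !hornerC.
congr (_ - _ * _ - _ * _); apply: eq_bigr => k _.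
- by rewrite horner_bern_poly horner_eul_poly mulrA mulrAC.
- by rewrite horner_bern_poly horner_eul_poly mulrA mulrAC.
- by rewrite !horner_eul_poly mulrA mulrAC.
Qed.

End IdentityOne.

Section IdentityTwo.
Variable F : numFieldType.
Implicit Types (r s t : F) (x y z : {poly F}) (n : nat).

Local Notation bernoulli := (bernoulli F).
Local Notation B := (@bern_poly F).

Lemma int01_binconv_bern_reflect n r s :
  int01 (binconv B B n.+1 r s (1 - 'X) 'X) =
  ((-1) ^+ n.+1 * ffact s n.+1 + ffact r n.+1
     - \sum_(k < n.+2) (-1) ^+ (n.+1 - k) * ffact r k * ffact s (n.+1 - k))
  / n.+1`!%:R * bernoulli n.+1.
Proof.
rewrite /binconv raddf_sum /= big_ord_recl big_ord_recr /=.
rewrite [in RHS]big_ord_recl [in RHS]big_ord_recr /=.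
rewrite /bump !leq0n /= !add1n !subn0 subnn !ffact0 bern_poly0 !rmorph1 mulr1 !mul1r.
rewrite comp_polyXr !int01Z int01_bern_poly_reflect int01_bern_poly !mulr0 add0r addr0.
have drop_ends S : (-1) ^+ n.+1 * ffact s n.+1 + ffact r n.+1
    - ((-1) ^+ n.+1 * 1 * ffact s n.+1 + (S + ffact r n.+1 * 1)) = - S by ring.
rewrite drop_ends -sumrN !mulr_suml; apply: eq_bigr => i _.
have lt_in : (i.+1 <= n)%N := ltn_ord i.
rewrite add1n (subSn lt_in) bern_poly_reflect comp_polyXr -scalerAl !int01Z.
rewrite int01_bern_poly_mul -addnS (subnK lt_in) !binomCE !exprS -[(-1) ^+ i]signr_odd.
by case: odd; rewrite ?expr1 ?expr0; field; natr_neq0.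
Qed.

Definition defect2 n r s t x y z : {poly F} :=
  r *: binconv B B n s t x y + s *: binconv B B n t r y z + t *: binconv B B n r s z x.

Lemma defect2_comp n r s t x y z w :
  defect2 n r s t x y z \Po w = defect2 n r s t (x \Po w) (y \Po w) (z \Po w).
Proof. by rewrite /defect2 !comp_polyD !comp_polyZ !binconv_comp. Qed.

Lemma defect2_0 r s t x y z : r + s + t = 0 -> defect2 0 r s t x y z = 0.
Proof.
move=> rst; rewrite /defect2 !binconv0 bern_poly0 !rmorph1 mulr1 -!scalerDl.
by rewrite rst scale0r.
Qed.

Lemma deriv_defect2 n r s t x y z :
  r + s + t = n.+1%:R -> x^`() + y^`() + z^`() = 0 ->
  (defect2 n.+1 r s t x y z)^`() =
  t *: (defect2 n r s (t - 1) x y z * x^`()) - s *: (defect2 n r (s - 1) t x y z * y^`()).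
Proof.
move=> rst dsum.
have dz : z^`() = - x^`() - y^`() by rewrite -[RHS]add0r -dsum; ring.
have rst1 : r + s + t - 1 = n%:R by rewrite rst -natr1 addrK.
have pascal_zx : (t - 1) *: binconv B B n r s z x + s *: binconv B B n r (s - 1) z x
    + r *: binconv B B n (r - 1) s z x = 0.
  by apply: binconv_pascal3; rewrite -rst1; ring.
have pascal_yz : (s - 1) *: binconv B B n t r y z + r *: binconv B B n t (r - 1) y z
    + t *: binconv B B n (t - 1) r y z = 0.
  by apply: binconv_pascal3; rewrite -rst1; ring.
rewrite /defect2 !derivD !derivZ !(deriv_binconv (bern_polyP F) (bern_polyP F)) dz.
move: pascal_zx pascal_yz; rewrite -!mul_polyC !polyCB !polyC1.
move: (binconv B B n r s z x) (binconv B B n r (s - 1) z x) (binconv B B n (r - 1) s z x).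
move: (binconv B B n t r y z) (binconv B B n t (r - 1) y z) (binconv B B n (t - 1) r y z).
move: (binconv B B n s (t - 1) x y) (binconv B B n (s - 1) t x y).
move=> C1 C2 B1 B2 B3 A1 A2 A3 pascal_zx pascal_yz.
apply/eqP; rewrite -subr_eq0; apply/eqP.
transitivity (s%:P * y^`() * ((s%:P - 1) * B1 + r%:P * B2 + t%:P * B3)
  - t%:P * x^`() * ((t%:P - 1) * A1 + s%:P * A2 + r%:P * A3)); first by ring.
by rewrite pascal_zx pascal_yz !mulr0 subrr.
Qed.

Lemma int01_defect2_path n r s t : r + s + t = n.+1%:R ->
  int01 (defect2 n.+1 r s t 'X 0%:P (1 - 'X)) = 0.
Proof.
move=> rst; rewrite /defect2 !raddfD /= !int01Z.
rewrite int01_binconv_constr => [|k]; last by rewrite comp_polyXr int01_bern_poly.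
rewrite int01_binconv_constl => [|k]; last exact: int01_bern_poly_reflect.
rewrite int01_binconv_bern_reflect !bern_poly_at0 !binomCE.
move: (ffact_alternating_sum r s n.+1); rewrite [ffact r n.+2]ffactS [ffact s n.+2]ffactS.
move: (\sum_(k < n.+2) _) (ffact r n.+1) (ffact s n.+1) => S fr fs tele.
have -> : t = n.+1%:R - r - s by rewrite -rst; ring.
transitivity (bernoulli n.+1 / n.+1`!%:R * ((r + s - n.+1%:R) * S
  - ((-1) ^+ n.+1 * (fs * (s - n.+1%:R)) + fr * (r - n.+1%:R)))).
  by field; natr_neq0.
by rewrite tele subrr mulr0.
Qed.

Lemma defect2_eq0 n r s t x y z :
  r + s + t = n%:R -> x + y + z = 1 -> defect2 n r s t x y z = 0.
Proof.
rewrite -[n%:R]addr0.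
apply: (vanishing_scheme (x0 := 'X) (y0 := 0%:P) (z0 := 1 - 'X) (@defect2_comp)).
- by move=> *; apply: defect2_0.
- by move=> m *; apply: deriv_defect2 => //; rewrite -[_%:R]addr0.
- by rewrite polyC0 addr0 addrC subrK.
- by move=> m *; apply: int01_defect2_path; rewrite -[_%:R]addr0.
Qed.

Lemma horner_defect2 n r s t (x y z w : F) :
  (defect2 n r s t x%:P y%:P z%:P).[w] =
  r * Mfun n s t x y + s * Mfun n t r y z + t * Mfun n r s z x.
Proof.
rewrite /defect2 !(hornerD, hornerZ).
by congr (_ * _ + _ * _ + _ * _); rewrite horner_binconv; apply: eq_bigr => k _;
  rewrite !hornerC !horner_bern_poly mulrA.
Qed.

End IdentityTwo.

Theorem theorem1p1 (R : realType) (n : nat) (x y z : R[i]) :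
  (0 < n)%N -> x + y + z = 1 ->
  (forall r s t : R[i], r + s + t = n%:R - 1 ->
     \sum_(k < n.+1) (-1) ^+ k * binomC r k * binomC s (n - k)
        * bernoulli_poly k x * euler_poly (n - k) z
     - (-1) ^+ n * \sum_(k < n.+1) (-1) ^+ k * binomC r k * binomC t (n - k)
        * bernoulli_poly k y * euler_poly (n - k) z
     = r / 2%:R * \sum_(l < n) (-1) ^+ l * binomC s l * binomC t (n - 1 - l)
        * euler_poly l y * euler_poly (n - 1 - l) x)
  /\
  (forall r s t : R[i], r + s + t = n%:R ->
     r * Mfun n s t x y + s * Mfun n t r y z + t * Mfun n r s z x = 0).
Proof.
case: n => [//|n] _ xyz.
have xyz1 : x%:P + y%:P + z%:P = 1 by rewrite -!polyCD xyz.
split=> r s t rst.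
- apply/eqP; rewrite subSS subn0 -subr_eq0 -(horner_defect1 _ _ _ _ _ _ _ 0).
  by rewrite defect1_eq0 ?horner0.
- by rewrite -(horner_defect2 _ _ _ _ _ _ _ 0) defect2_eq0 ?horner0.
Qed.
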